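(* Let $p\in(0,1)$, let $(a_j)_{j\ge1}$ be positive rational numbers with $\sum_{j=1}^\infty a_j=p$, and let $\epsilon:\mathbb N\to\mathbb R$ be monotonically non-increasing with $\lim_{N\to\infty}\epsilon(N)=0$ and $p-\sum_{j=1}^N a_j\le \epsilon(N)$ for all $N\in\mathbb N$. Let $X_1,X_2,\dots$ be independent Bernoulli$(1/2)$ random variables, run the algorithm described in the context, and let $N_M$ denote the number of series terms used when the algorithm terminates (the final value of the counter $N$). Then for every $n\in\mathbb N$, $$\Pr[N_M>n]<4\epsilon(n).$$ In addition, if there exist $r>1$, $K>0$ and $n_0$ such that $\epsilon(n)\le K/n^r$ for all $n\ge n_0$, then $\mathbb E[N_M]<\infty$.
   Context: The algorithm: initialise $N\leftarrow0$, $S\leftarrow0$, $E\leftarrow1$, $A\leftarrow0$, $s\leftarrow0$, $k\leftarrow0$. Repeat the following iteration: set $k\leftarrow k+1$ and $A\leftarrow A+s\cdot2^{-k}$; then, while none of the three conditions (i) $S+E\le A+2^{-k}$, (ii) $S>A+2^{-k}$, (iii) $S>A+\tfrac12 2^{-k}$ and $S+E\le A+\tfrac32 2^{-k}$ holds, do $N\leftarrow N+1$, $S\leftarrow S+a_N$, $E\leftarrow\epsilon(N)$; after this inner loop set $s\leftarrow0$ if (i) holds, else $s\leftarrow2$ if (ii) holds, else $s\leftarrow1$. The iteration is repeated until $X_k=0$ (coin $X_k$ is consumed at the end of iteration $k$). After the last iteration, output $Y=0$ if $s=0$, $Y=1$ if $s=2$, and $Y=X_{k+1}$ if $s=1$.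 *)

From HB Require Import structures.
From mathcomp Require Import all_boot all_order all_algebra.
From mathcomp Require Import all_classical all_reals all_analysis.
Set Implicit Arguments. Unset Strict Implicit. Unset Printing Implicit Defensive.
Import Order.TTheory GRing.Theory Num.Theory.
Import numFieldNormedType.Exports.
Local Open Scope classical_set_scope.
Local Open Scope ring_scope.

(* Control phase of the algorithm: about to start an outer iteration,
   inside the inner while loop, or halted. *)
Inductive phase := Outer | Inner | Halt.

Record state (R : Type) := St {
  stN : nat; stS : R; stE : R; stA : R; sts : nat; stk : nat; stph : phase }.

Section Algorithm.
Variables (R : realType) (a : nat -> rat) (eps : nat -> R) (X : nat -> bool).
(* a j is the j-th series term (j >= 1), eps N the tail bound,
   X k the k-th coin (k >= 1), true = 1, false = 0. *)

Definition init_state : state R := St 0 0 1 0 0 0 Outer.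

Definition cond_i (k : nat) (A S E : R) : bool := S + E <= A + 2 ^- k.
Definition cond_ii (k : nat) (A S E : R) : bool := S > A + 2 ^- k.
Definition cond_iii (k : nat) (A S E : R) : bool :=
  (S > A + 2^-1 * 2 ^- k) && (S + E <= A + 3%:R / 2 * 2 ^- k).

Definition alg_step (st : state R) : state R :=
  let: St n S0 E0 A0 s k ph := st in
  match ph with
  | Halt => st
  | Outer => let k' := k.+1 in St n S0 E0 (A0 + s%:R * 2 ^- k') s k' Inner
  | Inner =>
      if ~~ [|| cond_i k A0 S0 E0, cond_ii k A0 S0 E0 | cond_iii k A0 S0 E0] then
        St n.+1 (S0 + ratr (a n.+1)) (eps n.+1) A0 s k Inner
      else
        let s' := if cond_i k A0 S0 E0 then 0%N
                  else if cond_ii k A0 S0 E0 then 2%N else 1%N in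
        (* coin X_k is consumed at the end of iteration k; stop iff X_k = 0 *)
        St n S0 E0 A0 s' k (if X k then Outer else Halt)
  end.

Definition alg_run (t : nat) : state R := iter t alg_step init_state.

Definition alg_halted (t : nat) : bool :=
  if stph (alg_run t) is Halt then true else false.

(* N_M: the final value of the counter N when the algorithm terminates
   (arbitrarily 0 on the event that it never terminates). *)
Definition final_N : nat :=
  match pselect (exists t, alg_halted t) with
  | left H => stN (alg_run (ex_minn H))
  | right _ => 0%N
  end.
End Algorithm.

Definition indep_coins d (T : measurableType d) (R : realType)
  (P : probability T R) (X : nat -> T -> bool) : Prop :=
  forall (I : seq nat) (b : nat -> bool), uniq I ->
    P [set w | forall i, i \in I -> X i w = b i] =
    (\prod_(i <- I) P [set w | X i w = b i])%E.

(* If X_j is the first tail, the run stops at iteration j at the latest, and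
   during iterations k <= j the counter N never passes an n with
   2 eps(n) <= 2^-j: once N = n we have 2 E = 2 eps(n) <= 2^-k, and an
   enclosure [S, S + E] of width at most 2^-k / 2 always meets one of the
   three stopping tests.  Hence, when 2 eps(n) <= 1, N_M > n forces
   X_1 = ... = X_K = 1 for the largest K with 2 eps(n) <= 2^-K, an event of
   probability 2^-K < 4 eps(n).
   In the same way N_M <= c(J) for the first tail J, whenever
   2 eps(c(j)) <= 2^-j; if eps(n) <= K / n^r one can take c(j) of order
   2^(j/r), and E[N_M] <= sum_j c(j) 2^-(j-1) < oo since 2^(1/r) < 2. *)

From HB Require Import structures.
From mathcomp Require Import all_boot all_order all_algebra.
From mathcomp Require Import all_classical all_reals all_analysis.
From mathcomp Require Import measurable_realfun lebesgue_integral.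
From mathcomp Require Import ring lra.
Set Implicit Arguments. Unset Strict Implicit. Unset Printing Implicit Defensive.
Import Order.TTheory GRing.Theory Num.Theory.
Import numFieldNormedType.Exports.
Local Open Scope classical_set_scope.
Local Open Scope ring_scope.

Lemma ler_invexp2 (R : numFieldType) m n : (m <= n)%N -> 2 ^- n <= 2 ^- m :> R.
Proof.
by move=> mn; rewrite lef_pV2 ?posrE ?exprn_gt0 //; apply: ler_weXn2l; rewrite ?ler1n.
Qed.

Section algorithm.
Variables (R : realType) (a : nat -> rat) (eps : nat -> R) (X : nat -> bool).
Local Notation run := (alg_run a eps X).

Lemma alg_runS t : run t.+1 = alg_step a eps X (run t).
Proof. by []. Qed.

Lemma some_cond_holds k (A S E : R) : 2 * E <= 2 ^- k ->
  [|| cond_i k A S E, cond_ii k A S E | cond_iii k A S E].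
Proof.
rewrite /cond_i /cond_ii /cond_iii.
have : 0 < (2 ^- k : R) by rewrite invr_gt0 exprn_gt0.
move: (2 ^- k : R) => h h_gt0 hE.
have [//|SE_gt] := leP (S + E) (A + h).
have [|S_le] := ltP (A + h) S; first by rewrite orbT.
by rewrite /=; apply/andP; split; lra.
Qed.

Lemma alg_run_stk_le t : (stk (run t) <= t)%N.
Proof.
elim: t => [//|t]; rewrite alg_runS.
case: (run t) => n S E A s k [] /= k_le.
- by [].
- by case: ifP => _; apply: leqW.
- exact: leqW.
Qed.

Lemma alg_run_stE t : (0 < stN (run t))%N -> stE (run t) = eps (stN (run t)).
Proof.
elim: t => [//|t IH]; rewrite alg_runS.
case: (run t) IH => n S E A s k [] //= IH.
by case: ifP => //= _; case: ifP.
Qed.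

Lemma alg_run_stN_le n j : (0 < n)%N -> (0 < j)%N -> X j = false ->
  2 * eps n <= 2 ^- j -> forall t, (stN (run t) <= n)%N.
Proof.
move=> n_gt0 j_gt0 Xj eps_le t.
suff : [/\ (stN (run t) <= n)%N, stph (run t) = Outer -> (stk (run t) < j)%N
         & stph (run t) = Inner -> (stk (run t) <= j)%N] by case.
elim: t => [|t IH]; first by split.
have := @alg_run_stE t; rewrite alg_runS; move: IH.
case: (run t) => N S E A s k [] /= [N_le Hout Hin] stE_eq //.
- by split=> // _; apply: Hout.
- have k_le := Hin erefl.
  case: ifP => [stop|_].
    split=> //=; rewrite ltn_neqAle N_le andbT; apply/eqP => N_eq.
    move: stop; rewrite some_cond_holds // stE_eq N_eq //.
    exact: le_trans eps_le (ler_invexp2 _ k_le).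
  case Xk: (X k); split=> //= _.
  by rewrite ltn_neqAle k_le andbT; apply/eqP => k_eq; move: Xk; rewrite k_eq Xj.
Qed.

Lemma alg_run_halt_coin t : stph (run t) = Halt ->
  (0 < stk (run t))%N /\ X (stk (run t)) = false.
Proof.
suff : (stph (run t) = Inner -> (0 < stk (run t))%N) /\
       (stph (run t) = Halt -> (0 < stk (run t))%N /\ X (stk (run t)) = false).
  by case.
elim: t => [//|t]; rewrite alg_runS.
case: (run t) => n S E A s k [] /= [Hin _] //.
by case: ifP => _ //=; case Xk: (X k) => //=; split=> // _; split=> //; apply: Hin.
Qed.

Lemma alg_run_halted_stable t : alg_halted a eps X t ->
  forall u, run (u + t) = run t.
Proof.
rewrite /alg_halted => halted; elim=> [//|u IH].
by rewrite addSn alg_runS IH; case: (run t) halted => n S E A s k [].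
Qed.

Lemma final_N_halted t : alg_halted a eps X t -> final_N a eps X = stN (run t).
Proof.
move=> halted; rewrite /final_N; case: pselect => [ex|]; last by case; exists t.
case: ex_minnP => m Hm /(_ t halted) m_le.
by rewrite -(subnK m_le) alg_run_halted_stable.
Qed.

Lemma final_N_gt0_halted : (0 < final_N a eps X)%N ->
  exists2 t, alg_halted a eps X t & final_N a eps X = stN (run t).
Proof.
rewrite /final_N; case: pselect => // ex _.
by case: ex_minnP => m Hm _; exists m.
Qed.

Lemma final_N_gt0_tail : (0 < final_N a eps X)%N ->
  exists j, (0 < j)%N && ~~ X j.
Proof.
case/final_N_gt0_halted => t; rewrite /alg_halted => + _.
case halt: (stph (run t)) => // _.
by have [k_gt0 Xk] := alg_run_halt_coin halt; exists (stk (run t)); rewrite k_gt0 Xk.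
Qed.

Lemma final_N_le n j : (0 < n)%N -> (0 < j)%N -> X j = false ->
  2 * eps n <= 2 ^- j -> (final_N a eps X <= n)%N.
Proof.
move=> n_gt0 j_gt0 Xj eps_le; rewrite /final_N; case: pselect => // ex.
exact: (alg_run_stN_le n_gt0 j_gt0 Xj eps_le).
Qed.

End algorithm.

Lemma eq_alg_run (R : realType) (a : nat -> rat) (eps : nat -> R) t X Y :
  (forall i, (i <= t)%N -> X i = Y i) -> alg_run a eps X t = alg_run a eps Y t.
Proof.
elim: t => [//|t IH] XY; rewrite !alg_runS IH => [|i it]; last exact/XY/leqW.
have := alg_run_stk_le a eps Y t.
case: (alg_run a eps Y t) => n S E A s k [] //= k_le.
by case: ifP => // _; rewrite XY // (leq_trans k_le).
Qed.

Section prefix_measurable.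
Variables (d : measure_display) (T : measurableType d) (X : nat -> T -> bool).
Hypothesis mX : forall i, measurable [set w | X i w].

Lemma measurable_prefix_pred m (F : (nat -> bool) -> bool) :
  (forall x y, (forall i, (i < m)%N -> x i = y i) -> F x = F y) ->
  measurable [set w | F (X^~ w)].
Proof.
elim: m F => [|m IH] F HF.
  have FE w : F (X^~ w) = F (fun=> false) by exact: HF.
  case: (boolP (F (fun=> false))) => [Ftrue|Ffalse].
    rewrite (_ : [set w | _] = setT) //.
    by apply/seteqP; split=> w //= _; rewrite FE.
  rewrite (_ : [set w | _] = set0) //.
  by apply/seteqP; split=> w //=; rewrite FE (negbTE Ffalse).
pose Fb b x := F (fun i => if i == m then b else x i).
have mFb b : measurable [set w | Fb b (X^~ w)].
  apply: IH => x y xy; apply: HF => i im.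
  by case: eqP => // /eqP ne; apply: xy; rewrite ltn_neqAle ne -ltnS.
have FbE w : F (X^~ w) = Fb (X m w) (X^~ w) by apply: HF => i _; case: eqP => // ->.
rewrite (_ : [set w | _] = ([set w | X m w] `&` [set w | Fb true (X^~ w)]) `|`
                           (~` [set w | X m w] `&` [set w | Fb false (X^~ w)])).
  by apply: measurableU; apply: measurableI => //; exact: measurableC.
apply/seteqP; split=> w /=; rewrite FbE.
  by case: (X m w) => Fw; [left | right].
by case=> -[]; case: (X m w).
Qed.

End prefix_measurable.

Lemma exists_invexp2_bracket (R : archiFieldType) (x : R) : 0 < x <= 1 ->
  exists K, x <= 2 ^- K /\ 2 ^- K < 2 * x.
Proof.
move=> /andP[x_gt0 x_le1].
have ex : exists m, 2 ^- m < x.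
  exists (Num.truncn x^-1).+1; rewrite invf_plt ?posrE ?exprn_gt0 //.
  by rewrite (lt_trans (truncnS_gt _)) // -natrX ltr_nat ltn_expl.
case: (ex_minnP ex) => -[|K].
  by rewrite expr0 invr1 => /lt_le_trans/(_ x_le1); rewrite ltxx.
move=> lt_x min_m; exists K; split.
  by rewrite leNgt; apply/negP => /min_m; rewrite ltnn.
by move: lt_x; rewrite exprS invfM; lra.
Qed.

Lemma EFin_natr_nneseries (R : realType) (F : nat) :
  ((F%:R : R)%:E = \sum_(n <oo) (((n < F)%N)%:R : R)%:E)%E.
Proof.
rewrite (nneseries_split 0 F) => [|k _]; last by rewrite lee_fin ler0n.
rewrite (eseries0 (N := (0 + F)%N)) => [|i]; last by rewrite add0n => iF _; rewrite ltnNge iF.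
rewrite adde0 sumEFin add0n (eq_big_nat _ _ (F2 := fun=> 1)) => [|i /andP[_ ->]] //.
by rewrite sumr_const_nat subn0.
Qed.

Section coins.
Variables (R : realType) (d : measure_display) (T : measurableType d).
Variables (P : probability T R) (X : nat -> T -> bool).
Variables (a : nat -> rat) (eps : nat -> R).
Hypothesis mX : forall i, measurable [set w | X i w].
Hypothesis PX : forall i, P [set w | X i w] = (2^-1 : R)%:E.
Hypothesis indep : indep_coins P X.
Local Notation NM w := (final_N a eps (X^~ w)).

Definition heads K := [set w | forall i, (0 < i <= K)%N -> X i w].

Lemma measurable_heads K : measurable (heads K).
Proof.
rewrite (_ : heads K = [set w | all (X^~ w) (iota 1 K)]).
  apply: (measurable_prefix_pred mX (m := K.+1) (F := fun x => all x (iota 1 K))) => x y xy.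
  by apply: eq_in_all => i; rewrite mem_iota add1n ltnS => /andP[_ /xy].
apply/seteqP; split=> w /= H; first by apply/allP => i; rewrite mem_iota add1n ltnS => /H.
by move=> i i_in; apply: (allP H); rewrite mem_iota add1n ltnS.
Qed.

Lemma prob_heads K : P (heads K) = ((2^-1 : R) ^+ K)%:E.
Proof.
rewrite (_ : heads K = [set w | forall i, i \in iota 1 K -> X i w = true]); last first.
  apply/seteqP; split=> w /= H i; first by rewrite mem_iota add1n ltnS => /H.
  by move=> i_in; apply: H; rewrite mem_iota add1n ltnS.
rewrite indep ?iota_uniq // (eq_bigr (fun=> (2^-1 : R)%:E)) => [|i _]; last exact: PX.
have -> : iota 1 K = index_iota 1 K.+1 by rewrite /index_iota subn1.
by rewrite prodEFin prodr_const_nat subn1.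
Qed.

Lemma measurable_final_N_gt n : measurable [set w | (n < NM w)%N].
Proof.
rewrite (_ : [set w | _] = \bigcup_t [set w |
    alg_halted a eps (X^~ w) t && (n < stN (alg_run a eps (X^~ w) t))%N]).
  apply: bigcupT_measurable => t.
  apply: (measurable_prefix_pred mX (m := t.+1)
    (F := fun x => alg_halted a eps x t && (n < stN (alg_run a eps x t))%N)) => x y xy.
  by rewrite /alg_halted (eq_alg_run _ _ xy).
apply/seteqP; split=> w /=.
  move=> n_lt; have [t halted NME] := final_N_gt0_halted (leq_ltn_trans (leq0n n) n_lt).
  by exists t => //=; rewrite halted -NME.
by case=> t _ /andP[halted]; rewrite (final_N_halted halted).
Qed.

Lemma final_N_gt_sub_heads n K : (0 < n)%N -> 2 * eps n <= 2 ^- K ->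
  [set w | (n < NM w)%N] `<=` heads K.
Proof.
move=> n_gt0 eps_le w /= n_lt i /andP[i_gt0 i_le]; apply: contraTT n_lt => /negbTE Xi.
rewrite -leqNgt; apply: (final_N_le a (X := X^~ w) n_gt0 i_gt0 Xi).
exact: (le_trans eps_le (ler_invexp2 _ i_le)).
Qed.

Lemma prob_final_N_gt n : (0 < n)%N -> 0 < eps n ->
  (P [set w | (n < NM w)%N] < (4 * eps n)%:E)%E.
Proof.
move=> n_gt0 eps_gt0; have [eps_big|eps_small] := ltP 1 (2 * eps n).
  apply: le_lt_trans (probability_le1 _ (measurable_final_N_gt n)) _.
  by rewrite lte_fin; lra.
have [|K [K_ge K_lt]] := @exists_invexp2_bracket _ (2 * eps n).
  by apply/andP; split; lra.
apply: (@le_lt_trans _ _ (P (heads K))).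
  apply: le_measure; rewrite ?inE; [exact: measurable_final_N_gt |
    exact: measurable_heads | exact: final_N_gt_sub_heads].
by rewrite prob_heads lte_fin exprVn; lra.
Qed.

Lemma measurable_final_N : measurable_fun setT (fun w => ((NM w)%:R : R)%:E).
Proof.
rewrite (_ : (fun w => _) =
    fun w => (\sum_(n <oo) (\1_[set w | (n < NM w)%N] w : R)%:E)%E); last first.
  apply/funext => w; rewrite EFin_natr_nneseries; apply: eq_eseriesr => n _.
  by rewrite indicE; case: (boolP (n < NM w)%N) => H;
    [rewrite mem_set | rewrite memNset //; apply/negP].
apply: ge0_emeasurable_sum => [k w _ _|k _]; first by rewrite lee_fin.
by apply/measurable_EFinP; apply: measurable_indic; exact: measurable_final_N_gt.
Qed.

Section tail_index.
Variable c : nat -> nat.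
Hypothesis c_tail : forall j, (0 < j)%N -> (0 < c j)%N /\ 2 * eps (c j) <= 2 ^- j.

Let g k w : \bar R := ((c k.+1)%:R * \1_(heads k) w)%:E.

Let g_ge0 k w : (0 <= g k w)%E.
Proof. by rewrite lee_fin mulr_ge0. Qed.

(* The first tail X_(j+1) bounds N_M by c (j+1) on heads j. *)
Lemma final_N_le_heads_series w : (((NM w)%:R : R)%:E <= \sum_(k <oo) g k w)%E.
Proof.
have [->|NM_gt0] := posnP (NM w); first by apply: nneseries_ge0 => k _ _.
have tail : exists j, (0 < j)%N && ~~ X j w := final_N_gt0_tail NM_gt0.
have [[//|j] /= /negbTE Xj j_min] := ex_minnP tail.
have heads_j : heads j w.
  move=> i /andP[i_gt0 i_le]; apply/negPn/negP => Xi.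
  by have := j_min i; rewrite i_gt0 Xi ltnNge i_le => /(_ isT).
have [c_gt0 c_eps] := c_tail (ltn0Sn j).
have NM_le := final_N_le a (X := X^~ w) c_gt0 (ltn0Sn j) Xj c_eps.
apply: le_trans (nneseries_lim_ge (P := xpredT) (m := 0) j.+1 _) => [|k _ _] //.
rewrite big_nat_recr //= {2}/g indicE mem_set // mulr1.
by apply: le_trans (leeDr _ _); [rewrite lee_fin ler_nat | exact: sume_ge0].
Qed.

Lemma integral_final_N_le :
  (\int[P]_w ((NM w)%:R : R)%:E <=
     \sum_(k <oo) ((c k.+1)%:R * (2^-1 : R) ^+ k)%:E)%E.
Proof.
have mg k : measurable_fun setT (g k).
  apply/measurable_EFinP; apply: measurable_funM => //.
  by apply: measurable_indic; exact: measurable_heads.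
have int_g k : (\int[P]_w g k w = ((c k.+1)%:R * (2^-1 : R) ^+ k)%:E)%E.
  rewrite (integralZl_indic _ (fun=> heads k)) //; last exact: measurable_heads.
    rewrite integral_indic ?setIT ?EFinM; [|exact: measurableT|exact: measurable_heads].
    by congr (_ * _)%E; exact: prob_heads.
  by rewrite ltNge ler0n.
rewrite -(eq_eseriesr (fun k _ => int_g k)) -integral_nneseries //.
apply: ge0_le_integral => //.
- exact: measurable_final_N.
- exact: ge0_emeasurable_sum.
- by move=> w _; exact: final_N_le_heads_series.
Qed.

End tail_index.

End coins.

Section decay_index.
Variables (R : realType) (r K : R) (n0 : nat).
Hypotheses (r_gt1 : 1 < r) (K_gt0 : 0 < K).

(* An integer above (2^(j+1) K)^(1/r), and past n0 so that the decay bound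
   applies to it. *)
Definition decay_index j : nat := (n0 + Num.truncn ((2 ^+ j.+1 * K) `^ r^-1)).+1.

Lemma decay_index_eps (eps : nat -> R) :
  (forall n, (n0 <= n)%N -> eps n <= K / n%:R `^ r) ->
  forall j, 2 * eps (decay_index j) <= 2 ^- j.
Proof.
move=> eps_le j; have r_gt0 : 0 < r := lt_trans ltr01 r_gt1.
have e_gt0 : 0 < 2 ^+ j.+1 * K by rewrite mulr_gt0 // exprn_gt0.
have e_le : 2 ^+ j.+1 * K <= (decay_index j)%:R `^ r.
  have -> : 2 ^+ j.+1 * K = ((2 ^+ j.+1 * K) `^ r^-1) `^ r.
    by rewrite -powRrM mulVf ?lt0r_neq0 // powRr1 // ltW.
  apply: ge0_ler_powR; rewrite ?nnegrE ?powR_ge0 ?ltW //.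
  by rewrite /decay_index (lt_le_trans (truncnS_gt _)) // ler_nat ltnS leq_addl.
have eps_dec : eps (decay_index j) <= K / (decay_index j)%:R `^ r.
  by apply: eps_le; rewrite /decay_index leqW // leq_addr.
have : K / (decay_index j)%:R `^ r <= 2 ^- j / 2.
  apply: (le_trans (y := K / (2 ^+ j.+1 * K))).
    by rewrite ler_pM2l // lef_pV2 ?posrE // (lt_le_trans e_gt0).
  by rewrite invfM mulrCA mulfV ?lt0r_neq0 // mulr1 exprS invfM mulrC.
lra.
Qed.

Lemma decay_index_le j :
  (decay_index j)%:R <= n0.+1%:R + K `^ r^-1 * (2 `^ r^-1) ^+ j.+1.
Proof.
rewrite -powR_mulrn ?powR_ge0 // powRAC powR_mulrn // -powRM ?exprn_ge0 ?(ltW K_gt0) //.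
by rewrite mulrC /decay_index -addSn natrD lerD // truncn_le powR_ge0.
Qed.

Lemma decay_index_series_fin :
  (\sum_(k <oo) ((decay_index k.+1)%:R * (2^-1 : R) ^+ k)%:E < +oo)%E.
Proof.
set q : R := 2 `^ r^-1; set A : R := n0.+1%:R; set B : R := K `^ r^-1 * q ^+ 2.
have q_gt0 : 0 < q by rewrite powR_gt0.
have q_lt2 : q < 2.
  rewrite /q /powR pnatr_eq0 /= -[ltRHS]lnK ?posrE // ltr_expR.
  have ln2_gt0 : 0 < ln (2 : R) by rewrite ln_gt0 // ltr1n.
  by rewrite gtr_pMl // invf_lt1 // (lt_trans ltr01).
have B_ge0 : 0 <= B by rewrite mulr_ge0 ?powR_ge0 ?exprn_ge0 ?ltW.
apply: (@le_lt_trans _ _ (A / (1 - 2^-1) + B / (1 - q / 2))%:E); last exact: ltry.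
apply: lime_le.
  by apply: is_cvg_nneseries => k _ _; rewrite lee_fin mulr_ge0 // exprn_ge0.
apply: nearW => m; rewrite sumEFin lee_fin.
have geo_half : series (geometric A 2^-1) m <= A / (1 - 2^-1).
  by apply: geometric_le_lim; rewrite ?ler0n ?invr_gt0 ?ger0_norm ?invf_lt1 ?ltr1n.
have geo_q : series (geometric B (q / 2)) m <= B / (1 - q / 2).
  apply: geometric_le_lim => //; first by rewrite divr_gt0.
  by rewrite ger0_norm ?ltr_pdivrMr ?mul1r // divr_ge0 // ltW.
apply: le_trans (lerD geo_half geo_q).
rewrite /series /= -big_split /=; apply: ler_sum => k _.
suff -> : A * 2^-1 ^+ k + B * (q / 2) ^+ k = (A + K `^ r^-1 * q ^+ k.+2) * 2^-1 ^+ k.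
  by rewrite ler_wpM2r ?exprn_ge0 ?invr_ge0 // decay_index_le.
by rewrite /B expr_div_n exprVn !exprS; ring.
Qed.

End decay_index.

Lemma increasing_cvgn_lt (R : realType) (u : nat -> R) (p : R) :
  (forall n, u n < u n.+1) -> u @ \oo --> p -> forall n, u n < p.
Proof.
move=> u_incr u_p n; rewrite (lt_le_trans (u_incr n)) // -(cvg_lim _ u_p) //.
apply: nondecreasing_cvgn_le; last by apply/cvg_ex; exists p.
by apply/nondecreasing_seqP => k; exact: ltW.
Qed.

Theorem theorem3 (R : realType) (d : measure_display) (T : measurableType d)
  (P : probability T R) (X : nat -> T -> bool)
  (p : R) (a : nat -> rat) (eps : nat -> R) :
  0 < p < 1 ->
  (forall j, (1 <= j)%N -> 0 < a j) ->
  (fun N => \sum_(1 <= j < N.+1) (ratr (a j) : R)) @ \oo --> p ->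
  (forall m n, (1 <= m <= n)%N -> eps n <= eps m) ->
  eps @ \oo --> (0 : R) ->
  (forall N, (1 <= N)%N -> p - \sum_(1 <= j < N.+1) (ratr (a j) : R) <= eps N) ->
  (forall i, measurable [set w | X i w]) ->
  (forall i, P [set w | X i w] = (2^-1 : R)%:E) ->
  indep_coins P X ->
  (forall n, (1 <= n)%N ->
     (P [set w | (n < final_N a eps (fun i => X i w))%N] < (4 * eps n)%:E)%E)
  /\
  ((exists (r K : R) (n0 : nat), 1 < r /\ 0 < K /\
       forall n, (n0 <= n)%N -> eps n <= K / (n%:R `^ r)) ->
   (\int[P]_w ((final_N a eps (fun i => X i w))%:R : R)%:E < +oo)%E).
Proof.
move=> _ a_gt0 sum_p _ _ tail_le mX PX indep; split.
  move=> n n_gt0; apply: prob_final_N_gt => //.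
  have partial_lt N : \sum_(1 <= j < N.+1) (ratr (a j) : R) < p.
    apply: increasing_cvgn_lt sum_p N => N.
    by rewrite [ltRHS]big_nat_recr //= ltrDl ltr0q a_gt0.
  by have := partial_lt n; have := tail_le n n_gt0; lra.
case=> r [K [n0 [r_gt1 [K_gt0 eps_le]]]].
apply: le_lt_trans (decay_index_series_fin n0 r_gt1 K_gt0).
apply: integral_final_N_le => // j _.
by split; [exact: ltn0Sn | exact: decay_index_eps].
Qed.
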